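(* Let $\mathbb{F}$ be an infinite field. Let $I,J,K,I',J',K'$ be finite sets, $\Phi\subseteq I\times J\times K$, and let $f:I\to I'$, $g:J\to J'$, $h:K\to K'$ be functions. Then $R_s(\Phi)\ge R_s((f\times g\times h)(\Phi))$.
   Context: A tensor over $\mathbb{F}$ is a trilinear form $T=\sum_{i\in I,j\in J,k\in K} t_{i,j,k}x_iy_jz_k$ in formal variables indexed by finite sets $I,J,K$; its support is $\operatorname{supp}(T)=\{(i,j,k): t_{i,j,k}\neq 0\}$. The rank $R(T)$ is the smallest $L$ such that $T$ is a sum of $L$ products $(\sum_i a_ix_i)(\sum_j b_jy_j)(\sum_k c_kz_k)$ of linear forms. For $\Phi\subseteq I\times J\times K$, the support rank is $R_s(\Phi)=\min\{R(T):\operatorname{supp}(T)=\Phi\}$ (over tensors with coefficients in $\mathbb{F}$). *)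

From HB Require Import structures.
From mathcomp Require Import all_boot all_order all_algebra.
From Stdlib Require Import ClassicalEpsilon.
Set Implicit Arguments. Unset Strict Implicit. Unset Printing Implicit Defensive.
Import Order.TTheory GRing.Theory Num.Theory.
Local Open Scope ring_scope.

Definition infinite_field (F : fieldType) : Prop :=
  forall s : seq F, exists x : F, x \notin s.

Definition tensor (F : fieldType) (I J K : finType) := I -> J -> K -> F.

Definition supp (F : fieldType) (I J K : finType) (T : tensor F I J K)
  : {set I * J * K} :=
  [set x : I * J * K | T x.1.1 x.1.2 x.2 != 0].

Definition rank_le (F : fieldType) (I J K : finType) (T : tensor F I J K)
  (L : nat) : Prop :=
  exists (a : 'I_L -> I -> F) (b : 'I_L -> J -> F) (c : 'I_L -> K -> F),
    forall i j k, T i j k = \sum_(l < L) a l i * b l j * c l k.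

Definition pbool (P : Prop) : bool :=
  if excluded_middle_informative P then true else false.

Lemma pboolP (P : Prop) : reflect P (pbool P).
Proof. by rewrite /pbool; case: excluded_middle_informative => h; constructor. Qed.

Lemma rank_le_exists (F : fieldType) (I J K : finType) (T : tensor F I J K) :
  exists L, pbool (rank_le T L).
Proof.
exists #|{: I * J * K}|; apply/pboolP.
pose e := fun l : 'I_#|{: I * J * K}| => enum_val l.
exists (fun l i => ((i == (e l).1.1)%:R * T (e l).1.1 (e l).1.2 (e l).2)).
exists (fun l j => (j == (e l).1.2)%:R).
exists (fun l k => (k == (e l).2)%:R).
move=> i j k.
rewrite -(big_enum_val (A := {: I * J * K})
  (fun x : I * J * K => (i == x.1.1)%:R * T x.1.1 x.1.2 x.2 * (j == x.1.2)%:R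
                        * (k == x.2)%:R)) /=.
rewrite (bigD1 (i, j, k)) //= !eqxx !mulr1 mul1r big1 ?addr0 //.
case=> [[i' j'] k'] /= /negPf.
rewrite !xpair_eqE; rewrite ![_ == i]eq_sym ![_ == j]eq_sym ![_ == k]eq_sym.
case: (i == i') => /=; last by rewrite !mul0r.
case: (j == j') => /=; last by rewrite !mulr0 mul0r.
by move=> ->; rewrite mulr0.
Qed.

Definition rank (F : fieldType) (I J K : finType) (T : tensor F I J K) : nat :=
  ex_minn (rank_le_exists T).

Lemma srank_exists (F : fieldType) (I J K : finType) (Phi : {set I * J * K}) :
  exists L, pbool (exists T : tensor F I J K, supp T = Phi /\ rank T = L).
Proof.
exists (rank (fun i j k => ((i, j, k) \in Phi)%:R : F)); apply/pboolP.
eexists; split; last reflexivity.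
apply/setP => x; rewrite inE /=; case: x => [[i j] k] /=.
by case: ((i, j, k) \in Phi); rewrite ?oner_neq0 ?eqxx.
Qed.

Definition srank (F : fieldType) (I J K : finType) (Phi : {set I * J * K}) : nat :=
  ex_minn (srank_exists F Phi).

Definition timage (I J K I' J' K' : finType) (f : I -> I') (g : J -> J')
  (h : K -> K') (Phi : {set I * J * K}) : {set I' * J' * K'} :=
  [set (f x.1.1, g x.1.2, h x.2) | x in Phi].

(* Take a tensor T of minimal rank with support Phi and push it forward along
   f x g x h after scaling the slices by z^a(i), z^b(j), z^c(k), where
   a(i) + b(j) + c(k) is a Kronecker (mixed-radix) encoding of (i, j, k).
   The pushforward is a multilinear image of T, so its rank is at most that of T.
   Its entry at y is the value at z of the polynomial with coefficients the
   entries of T on the fibre over y; distinct triples give distinct exponents,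
   so this polynomial is nonzero exactly when y lies in the image of Phi.  Since
   F is infinite, some z avoids the roots of all these finitely many
   polynomials, and then the pushforward has support exactly (f x g x h)(Phi). *)
From mathcomp Require Import all_boot all_order all_algebra.
From mathcomp Require Import ring.
Set Implicit Arguments. Unset Strict Implicit. Unset Printing Implicit Defensive.
Import GRing.Theory.
Local Open Scope ring_scope.

Section RankFacts.
Variables (F : fieldType) (I J K : finType).
Implicit Types (T : tensor F I J K) (Phi : {set I * J * K}).

Lemma rank_le_rank T : rank_le T (rank T).
Proof. by rewrite /rank; case: ex_minnP => m /pboolP. Qed.

Lemma rank_min T L : rank_le T L -> (rank T <= L)%N.
Proof. by move=> TL; rewrite /rank; case: ex_minnP => m _; apply; apply/pboolP. Qed.

Lemma srank_attained Phi : exists T, supp T = Phi /\ rank T = srank F Phi.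
Proof. by rewrite /srank; case: ex_minnP => m /pboolP. Qed.

Lemma srank_le_rank Phi T : supp T = Phi -> (srank F Phi <= rank T)%N.
Proof.
by move=> sT; rewrite /srank; case: ex_minnP => m _; apply; apply/pboolP; exists T.
Qed.

End RankFacts.

Lemma mulr_sum3 (R : pzSemiRingType) (I J K : finType)
    (u : I -> R) (v : J -> R) (w : K -> R) :
  (\sum_i u i) * (\sum_j v j) * (\sum_k w k) =
  \sum_(x : I * J * K) u x.1.1 * v x.1.2 * w x.2.
Proof. by rewrite big_distrlr pair_bigA big_distrlr pair_bigA. Qed.

Section MultilinearImage.
Variables (F : fieldType) (I J K I' J' K' : finType).
Variables (A : I -> I' -> F) (B : J -> J' -> F) (C : K -> K' -> F).

Definition tmap (T : tensor F I J K) : tensor F I' J' K' := fun i' j' k' =>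
  \sum_(x : I * J * K) A x.1.1 i' * B x.1.2 j' * C x.2 k' * T x.1.1 x.1.2 x.2.

Lemma rank_le_tmap T L : rank_le T L -> rank_le (tmap T) L.
Proof.
move=> [a [b [c hT]]].
exists (fun l i' => \sum_i A i i' * a l i), (fun l j' => \sum_j B j j' * b l j),
  (fun l k' => \sum_k C k k' * c l k) => i' j' k'.
under eq_bigr do rewrite mulr_sum3.
rewrite exchange_big; apply: eq_bigr => x _.
by rewrite hT mulr_sumr; apply: eq_bigr => l _; ring.
Qed.

End MultilinearImage.

Section WeightedPushforward.
Variables (F : fieldType) (I J K I' J' K' : finType).
Variables (f : I -> I') (g : J -> J') (h : K -> K').
Variables (a : I -> F) (b : J -> F) (c : K -> F).

Local Notation fgh x := (f x.1.1, g x.1.2, h x.2).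

Definition tpush (T : tensor F I J K) : tensor F I' J' K' :=
  tmap (fun i i' => (f i == i')%:R * a i) (fun j j' => (g j == j')%:R * b j)
    (fun k k' => (h k == k')%:R * c k) T.

Lemma tpushE T i' j' k' : tpush T i' j' k' =
  \sum_(x | fgh x == (i', j', k')) a x.1.1 * b x.1.2 * c x.2 * T x.1.1 x.1.2 x.2.
Proof.
rewrite big_mkcond; apply: eq_bigr => x _; rewrite !xpair_eqE.
by case: (f _ == i'); case: (g _ == j'); case: (h _ == k') => /=; ring.
Qed.

Lemma supp_tpush_sub T : supp (tpush T) \subset timage f g h (supp T).
Proof.
apply/subsetP => -[[i' j'] k']; rewrite inE tpushE /=; apply: contraR => y_im.
apply/eqP/big1 => x /eqP fx.
have : x \notin supp T.
  by apply: contra y_im => xT; rewrite -fx; apply/imsetP; exists x.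
by rewrite inE negbK => /eqP ->; rewrite mulr0.
Qed.

End WeightedPushforward.

Lemma mixed_radix_inj (d x y u v : nat) :
  (x < d)%N -> (u < d)%N -> (x + d * y = u + d * v)%N -> x = u /\ y = v.
Proof.
move=> xd ud e.
have digits n m : (n < d -> (n + d * m) %% d = n /\ (n + d * m) %/ d = m)%N.
  move=> nd; rewrite addnC mulnC modnMDl divnMDl ?(leq_ltn_trans _ nd) //.
  by rewrite modn_small // divn_small // addn0.
have [[ex ey] [eu ev]] := (digits _ y xd, digits _ v ud).
by split; [rewrite -ex -eu e | rewrite -ey -ev e].
Qed.

Section Kronecker.
Variables (I J K : finType).

Definition kron_index (x : I * J * K) : nat :=
  enum_rank x.1.1 + #|I| * (enum_rank x.1.2 + #|J| * enum_rank x.2).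

Lemma kron_index_inj : injective kron_index.
Proof.
move=> [[i j] k] [[i' j'] k']; rewrite /kron_index /=.
case/mixed_radix_inj => // /val_inj /enum_rank_inj -> /mixed_radix_inj [] //.
by move=> /val_inj /enum_rank_inj -> /val_inj /enum_rank_inj ->.
Qed.

End Kronecker.

Lemma sum_monomials_neq0 (R : nzSemiRingType) (X : finType) (P : {pred X})
    (e : X -> nat) (cf : X -> R) :
  injective e -> (exists2 x, P x & cf x != 0) -> \sum_(x | P x) cf x *: 'X^(e x) != 0.
Proof.
move=> e_inj [x0 Px0 cx0]; apply: contra_neq cx0 => /(congr1 (coefp (e x0))).
rewrite /= coef0 coef_sum (bigD1 x0) //= coefZ coefXn eqxx mulr1 big1 ?addr0 //.
by move=> x /andP[_ xx0]; rewrite coefZ coefXn eq_sym (inj_eq e_inj) (negPf xx0) mulr0.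
Qed.

Lemma infinite_field_nonroot (F : fieldType) (p : {poly F}) :
  infinite_field F -> p != 0 -> exists x, ~~ root p x.
Proof.
move=> HF p0.
have [s [us ss]] : exists s : seq F, uniq s /\ size s = size p.
  elim: (size p) => [|n [s [us ss]]]; first by exists [::].
  by have [x xs] := HF s; exists (x :: s); rewrite /= xs us ss.
case: (pboolP (exists x, ~~ root p x)) => // nroot; case/eqP: p0.
apply: (roots_geq_poly_eq0 (rs := s)) => //.
  by apply/allP => x _; apply/negPn/negP => px; apply: nroot; exists x.
by rewrite ss.
Qed.

Lemma infinite_field_common_nonroot (F : fieldType) (Y : finType) (S : {pred Y})
    (p : Y -> {poly F}) :
  infinite_field F -> (forall y, y \in S -> p y != 0) ->
  exists z, forall y, y \in S -> (p y).[z] != 0.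
Proof.
move=> HF p0; have prod_neq0 : \prod_(y in S) p y != 0 by apply/prodf_neq0.
have [z] := infinite_field_nonroot HF prod_neq0.
by rewrite /root horner_prod => /prodf_neq0; exists z.
Qed.

Section GenericPushforward.
Variables (F : fieldType) (I J K I' J' K' : finType).
Variables (f : I -> I') (g : J -> J') (h : K -> K') (T : tensor F I J K).

Local Notation fgh x := (f x.1.1, g x.1.2, h x.2).

Definition fibre_poly (y : I' * J' * K') : {poly F} :=
  \sum_(x | fgh x == y) T x.1.1 x.1.2 x.2 *: 'X^(kron_index x).

Definition kron_push (z : F) : tensor F I' J' K' :=
  tpush f g h (fun i => z ^+ enum_rank i) (fun j => z ^+ (#|I| * enum_rank j))
    (fun k => z ^+ (#|I| * (#|J| * enum_rank k))) T.

Lemma kron_pushE z i' j' k' : kron_push z i' j' k' = (fibre_poly (i', j', k')).[z].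
Proof.
rewrite /kron_push tpushE horner_sum; apply: eq_bigr => x _.
by rewrite hornerZ hornerXn /kron_index mulnDr !exprD; ring.
Qed.

Lemma fibre_poly_neq0 y : y \in timage f g h (supp T) -> fibre_poly y != 0.
Proof.
case/imsetP => x xT ->; apply: sum_monomials_neq0; first exact: kron_index_inj.
by exists x => //; rewrite inE in xT.
Qed.

Lemma supp_kron_push z :
  (forall y, y \in timage f g h (supp T) -> (fibre_poly y).[z] != 0) ->
  supp (kron_push z) = timage f g h (supp T).
Proof.
move=> z_generic; apply/eqP; rewrite eqEsubset supp_tpush_sub.
by apply/subsetP => -[[i' j'] k'] y_im; rewrite inE kron_pushE z_generic.
Qed.

End GenericPushforward.

Theorem proposition3p2 (F : fieldType) (HF : infinite_field F)
  (I J K I' J' K' : finType) (Phi : {set I * J * K})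
  (f : I -> I') (g : J -> J') (h : K -> K') :
  (srank F (timage f g h Phi) <= srank F Phi)%N.
Proof.
have [T [<- rankT]] := srank_attained F Phi.
have [z z_generic] :=
  infinite_field_common_nonroot HF (fibre_poly_neq0 (f := f) (g := g) (h := h) (T := T)).
apply: leq_trans (srank_le_rank (supp_kron_push z_generic)) _.
by rewrite -rankT; apply/rank_min/rank_le_tmap/rank_le_rank.
Qed.
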